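(* Let $F:\mathcal{P}(V,A)\to S_2(A)$ be a weakly viable, reducible consular election rule satisfying SPP and SPO. Then the range graph $\mathcal{G}(F)$ is a complete bipartite graph.
   Context: $V$ is a finite nonempty set of voters, $A$ a finite set of alternatives; a profile $P$ assigns to each voter $i$ a linear order $P_i$ on $A$; $P_i'P_{-i}$ replaces voter $i$'s order by $P_i'$; $P|_B$ is the profile of restrictions to $B\subseteq A$. $S_2(A)$ is the set of 2-element subsets of $A$; a consular election rule is a map $F:\mathcal{P}(V,A)\to S_2(A)$. SPO: for all $P$, $i$, $P_i'$, $\mathrm{best}(P_i,F(P))\succeq_i\mathrm{best}(P_i,F(P_i'P_{-i}))$; SPP: same with $\mathrm{worst}$, where $\mathrm{best}(P_i,W)$, $\mathrm{worst}(P_i,W)$ are the $P_i$-best and $P_i$-worst elements of $W$. Weakly viable: every $a\in A$ lies in $F(P)$ for some $P$. $F$ is reducible if there is a partition $A=B\uplus C$ and social choice functions $G:\mathcal{P}(V,B)\to B$, $H:\mathcal{P}(V,C)\to C$ with $F(P)=\{G(P|_B),H(P|_C)\}$ for all $P$. The range graph $\mathcal{G}(F)$ has vertex set $A$ and edge set equal to the range of $F$. *)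

From mathcomp Require Import all_boot.
Set Implicit Arguments. Unset Strict Implicit. Unset Printing Implicit Defensive.

(* A (strict) linear order on A: r x y means "x is ranked above y". *)
Definition strict_linear (A : finType) (r : rel A) : Prop :=
  irreflexive r /\ transitive r /\ (forall x y, x != y -> r x y || r y x).

Definition linord (A : finType) := {r : rel A | strict_linear r}.

Definition pref (A : finType) (o : linord A) : rel A := proj1_sig o.

Definition profile (V A : finType) := V -> linord A.

Definition upd (V A : finType) (P : profile V A) (i : V) (o : linord A)
  : profile V A := fun j => if j == i then o else P j.

Definition subalt (A : finType) (B : {set A}) : finType := {x : A | x \in B}.

Lemma restr_linear (A : finType) (B : {set A}) (o : linord A) :
  strict_linear (fun x y : subalt B => pref o (val x) (val y)).
Proof.
case: o => r [irr [tr tot]] /=; split; [|split].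
- by move=> x; apply: irr.
- by move=> x y z; apply: tr.
- by move=> x y nxy; apply: tot; apply: contra nxy => /eqP/val_inj ->.
Qed.

Definition restr_ord (A : finType) (B : {set A}) (o : linord A) : linord (subalt B) :=
  exist _ _ (restr_linear B o).

Definition restr (V A : finType) (P : profile V A) (B : {set A})
  : profile V (subalt B) := fun i => restr_ord B (P i).

Definition is_best (A : finType) (o : linord A) (W : {set A}) (x : A) : Prop :=
  x \in W /\ forall y, y \in W -> y != x -> pref o x y.
Definition is_worst (A : finType) (o : linord A) (W : {set A}) (x : A) : Prop :=
  x \in W /\ forall y, y \in W -> y != x -> pref o y x.

Definition wpref (A : finType) (o : linord A) (x y : A) : Prop :=
  x = y \/ pref o x y.

Definition consular (V A : finType) (F : profile V A -> {set A}) : Prop :=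
  forall P, #|F P| = 2.

Definition SPO (V A : finType) (F : profile V A -> {set A}) : Prop :=
  forall P i o' x y, is_best (P i) (F P) x -> is_best (P i) (F (upd P i o')) y ->
    wpref (P i) x y.

Definition SPP (V A : finType) (F : profile V A -> {set A}) : Prop :=
  forall P i o' x y, is_worst (P i) (F P) x -> is_worst (P i) (F (upd P i o')) y ->
    wpref (P i) x y.

Definition weakly_viable (V A : finType) (F : profile V A -> {set A}) : Prop :=
  forall a : A, exists P, a \in F P.

Definition reducible (V A : finType) (F : profile V A -> {set A}) : Prop :=
  exists (B C : {set A}),
    [/\ [disjoint B & C], B :|: C = setT &
    exists (G : profile V (subalt B) -> subalt B) (H : profile V (subalt C) -> subalt C),
      forall P, F P = [set val (G (restr P B)); val (H (restr P C))]].

Definition range_edge (V A : finType) (F : profile V A -> {set A}) (e : {set A}) : Prop :=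
  exists P, F P = e.

Definition complete_bipartite (A : finType) (E : {set A} -> Prop) : Prop :=
  exists (X Y : {set A}),
    [/\ [disjoint X & Y], X :|: Y = setT, X != set0, Y != set0 &
    forall e, E e <-> exists x y, [/\ x \in X, y \in Y & e = [set x; y]]].

(** Reducibility alone forces the shape of the range graph.  Every edge
    [F P = {G (P|_B), H (P|_C)}] joins the part [B] to the part [C]; conversely,
    given [b] in [B] and [c] in [C], weak viability provides profiles [P1] with
    [G (P1|_B) = b] and [P2] with [H (P2|_C) = c], and the profile ranking [B]
    above [C], ordered inside [B] as in [P1] and inside [C] as in [P2], restricts
    to [P1] on [B] and to [P2] on [C], so [F] maps it to [{b, c}]. *)

From Stdlib Require Import FunctionalExtensionality ProofIrrelevance.
From mathcomp Require Import all_boot.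

Set Implicit Arguments.
Unset Strict Implicit.
Unset Printing Implicit Defensive.

Lemma enum_rank_linear (A : finType) :
  strict_linear (fun x y : A => enum_rank x < enum_rank y).
Proof.
split; [|split].
- by move=> x; rewrite ltnn.
- by move=> x y z; apply: ltn_trans.
- move=> x y nxy; rewrite -neq_ltn.
  by apply: contra nxy => /eqP/val_inj/enum_rank_inj ->.
Qed.

Definition enum_linord (A : finType) : linord A := exist _ _ (enum_rank_linear A).

Lemma restr_ext (V A : finType) (B : {set A}) (P Q : profile V A) :
  (forall i x y, x \in B -> y \in B -> pref (P i) x y = pref (Q i) x y) ->
  restr P B = restr Q B.
Proof.
move=> eqPQ; apply: functional_extensionality => i.
rewrite /restr /restr_ord.
move: (restr_linear B (P i)) (restr_linear B (Q i)).
have -> : (fun x y : subalt B => pref (P i) (val x) (val y)) =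
          (fun x y : subalt B => pref (Q i) (val x) (val y)).
  do 2![apply: functional_extensionality => ?].
  by apply: eqPQ; apply: valP.
by move=> p q; rewrite (proof_irrelevance _ p q).
Qed.

Section Concatenation.
Variables (A : finType) (B : {set A}).

Definition linord_cat_rel (o1 o2 : linord A) (x y : A) : bool :=
  if (x \in B) == (y \in B) then
    (if x \in B then pref o1 x y else pref o2 x y)
  else x \in B.

Lemma linord_cat_linear (o1 o2 : linord A) : strict_linear (linord_cat_rel o1 o2).
Proof.
rewrite /linord_cat_rel /pref.
case: o1 => r1 [irr1 [tr1 tot1]]; case: o2 => r2 [irr2 [tr2 tot2]] /=.
split; [|split].
- by move=> x; rewrite eqxx; case: (x \in B); [apply: irr1 | apply: irr2].
- move=> y x z.
  by case: (x \in B); case: (y \in B); case: (z \in B) => //=; [apply: tr1 | apply: tr2].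
- move=> x y nxy.
  by case: (x \in B); case: (y \in B) => //=; [apply: tot1 | apply: tot2].
Qed.

Definition linord_cat (o1 o2 : linord A) : linord A :=
  exist _ _ (linord_cat_linear o1 o2).

Variable V : finType.

Definition profile_cat (P1 P2 : profile V A) : profile V A :=
  fun i => linord_cat (P1 i) (P2 i).

Lemma restr_profile_cat_in (P1 P2 : profile V A) :
  restr (profile_cat P1 P2) B = restr P1 B.
Proof.
apply: restr_ext => i x y xB yB.
by rewrite /pref /= /linord_cat_rel xB yB.
Qed.

Lemma restr_profile_cat_out (C : {set A}) (P1 P2 : profile V A) :
  [disjoint B & C] -> restr (profile_cat P1 P2) C = restr P2 C.
Proof.
move=> disBC; apply: restr_ext => i x y xC yC.
by rewrite /pref /= /linord_cat_rel (disjointFl disBC xC) (disjointFl disBC yC).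
Qed.

End Concatenation.

Section ReducibleRule.
Variables (V A : finType) (B C : {set A}).
Hypotheses (disBC : [disjoint B & C]) (covBC : B :|: C = setT).
Variables (G : profile V (subalt B) -> subalt B) (H : profile V (subalt C) -> subalt C).
Variable F : profile V A -> {set A}.
Hypothesis F_reduced : forall P, F P = [set val (G (restr P B)); val (H (restr P C))].

Lemma mem_complement_part x : (x \in C) = (x \notin B).
Proof.
case xB: (x \in B); first by rewrite (disjointFr disBC xB).
by move: (in_setT x); rewrite -covBC in_setU xB.
Qed.

Lemma elected_in_left_part P x :
  x \in B -> x \in F P -> x = val (G (restr P B)).
Proof.
move=> xB; rewrite F_reduced !inE => /orP[/eqP // | /eqP xH].
by move: (valP (H (restr P C))); rewrite -xH mem_complement_part xB.
Qed.

Lemma elected_in_right_part P y :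
  y \in C -> y \in F P -> y = val (H (restr P C)).
Proof.
rewrite mem_complement_part => /negbTE yB.
rewrite F_reduced !inE => /orP[/eqP yG | /eqP //].
by move: (valP (G (restr P B))); rewrite -yG yB.
Qed.

Lemma reduced_profile_cat (P1 P2 : profile V A) :
  F (profile_cat B P1 P2) = [set val (G (restr P1 B)); val (H (restr P2 C))].
Proof. by rewrite F_reduced restr_profile_cat_in (restr_profile_cat_out _ _ disBC). Qed.

End ReducibleRule.

Theorem fact29 (V A : finType) (F : profile V A -> {set A}) :
  0 < #|V| ->
  consular F ->
  weakly_viable F ->
  reducible F ->
  SPP F ->
  SPO F ->
  complete_bipartite (range_edge F).
Proof.
move=> _ _ viable [B [C [disBC covBC [G [H F_reduced]]]]] _ _.
pose P0 : profile V A := fun=> enum_linord A.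
exists B, C; split => //.
- by apply/set0Pn; exists (val (G (restr P0 B))); apply: valP.
- by apply/set0Pn; exists (val (H (restr P0 C))); apply: valP.
move=> e; split.
- move=> [P <-]; rewrite F_reduced.
  by exists (val (G (restr P B))), (val (H (restr P C))); split => //; apply: valP.
- move=> [x [y [xB yC ->]]].
  have [P1 xP1] := viable x; have [P2 yP2] := viable y.
  exists (profile_cat B P1 P2); rewrite (reduced_profile_cat disBC F_reduced).
  by rewrite -(elected_in_left_part disBC covBC F_reduced xB xP1)
             -(elected_in_right_part disBC covBC F_reduced yC yP2).
Qed.
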